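(* Let $(X,Y)$ be a pair of racks which is productive and synchronized. Then the natural group homomorphism $\Gamma_{X\times Y}\to\Gamma_X\times\Gamma_Y\times\Gamma_{X_{\mathrm{triv}}\times Y_{\mathrm{triv}}}$ is injective.
   Context: A rack is a set $X$ with an operation $x^y$ such that $x\mapsto x^y$ is bijective for each $y$ and $(z^x)^y=(z^y)^{x^y}$. The product rack has $(x,a)^{(y,b)}=(x^y,a^b)$. The structure group is $\Gamma_X=\langle X\mid y^{-1}xy=x^y\rangle$, functorial; $\Gamma'$ denotes commutator subgroup. $X_{\mathrm{triv}}$ is the set of connected components of $X$ (classes of the smallest equivalence relation with $x\sim x^y$), regarded as a trivial rack ($a^b=a$), with the quotient map $X\to X_{\mathrm{triv}}$ a rack morphism; $\Gamma$ of a trivial rack is the free abelian group on it. The pair $(X,Y)$ is productive if the homomorphism $\Gamma'_{X\times Y}\to\Gamma'_X\times\Gamma'_Y$ induced by $\Gamma_{X\times Y}\to\Gamma_X\times\Gamma_Y$ is injective, and synchronized if the natural surjection $(X\times Y)_{\mathrm{triv}}\to X_{\mathrm{triv}}\times Y_{\mathrm{triv}}$ is a bijection. The map to $\Gamma_{X_{\mathrm{triv}}\times Y_{\mathrm{triv}}}$ is induced by $(x,y)\mapsto$(component of $x$, component of $y$). *)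

From mathcomp Require Import all_boot.
From Stdlib Require Import IndefiniteDescription.
Set Implicit Arguments. Unset Strict Implicit. Unset Printing Implicit Defensive.

Record rack := Rack {
  carrier :> Type;
  rop : carrier -> carrier -> carrier;          (* rop x y = x^y *)
  rop_bij : forall y, bijective (fun x => rop x y);
  rop_dist : forall x y z, rop (rop z x) y = rop (rop z y) (rop x y)
}.

Definition prod_op (X Y : rack) (p q : X * Y) : X * Y :=
  (rop p.1 q.1, rop p.2 q.2).

Lemma prod_op_bij (X Y : rack) (q : X * Y) : bijective (fun p => prod_op p q).
Proof.
case: (rop_bij q.1) => g1 h1 k1; case: (rop_bij q.2) => g2 h2 k2.
apply: (@Bijective _ _ _ (fun p : X * Y => (g1 p.1, g2 p.2))).
- by case=> a b; rewrite /prod_op /= (h1 a) (h2 b).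
- by case=> a b; rewrite /prod_op /= (k1 a) (k2 b).
Qed.

Lemma prod_op_dist (X Y : rack) (x y z : X * Y) :
  prod_op (prod_op z x) y = prod_op (prod_op z y) (prod_op x y).
Proof. by rewrite /prod_op /= (rop_dist x.1 y.1 z.1) (rop_dist x.2 y.2 z.2). Qed.

Definition prod_rack (X Y : rack) : rack :=
  @Rack (X * Y) (@prod_op X Y) (@prod_op_bij X Y) (@prod_op_dist X Y).

Lemma triv_bij (T : Type) (y : T) : bijective (fun x : T => (fun a _ => a) x y).
Proof. exact: (@Bijective _ _ _ id). Qed.
Lemma triv_dist (T : Type) (x y z : T) :
  (fun a (_ : T) => a) ((fun a (_ : T) => a) z x) y
  = (fun a (_ : T) => a) ((fun a (_ : T) => a) z y) ((fun a (_ : T) => a) x y).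
Proof. by []. Qed.
Definition triv_rack (T : Type) : rack := @Rack T (fun a _ => a) (@triv_bij T) (@triv_dist T).

Inductive connected (X : rack) : X -> X -> Prop :=
| conn_refl x : connected x x
| conn_sym x y : connected x y -> connected y x
| conn_trans x y z : connected x y -> connected y z -> connected x z
| conn_step x y : connected x (rop x y).

(* X_triv as a type: the set of connected components (equivalence classes). *)
Definition comps (X : rack) : Type :=
  {P : X -> Prop | exists x, P = connected x}.
Definition comp_of (X : rack) (x : X) : comps X :=
  exist _ (connected x) (ex_intro _ x erefl).
Definition Xtriv (X : rack) : rack := triv_rack (comps X).

Definition comp_rep (X : rack) (P : comps X) : X :=
  proj1_sig (constructive_indefinite_description _ (proj2_sig P)).

(* The natural map (X x Y)_triv -> X_triv x Y_triv (well defined, independent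
   of the representative). *)
Definition sync_map (X Y : rack) (P : comps (prod_rack X Y)) : comps X * comps Y :=
  (comp_of (comp_rep P).1, comp_of (comp_rep P).2).

Definition synchronized (X Y : rack) : Prop := bijective (@sync_map X Y).

(* Structure group Gamma_X = < X | y^-1 x y = x^y >, presented by words in
   letters (x, b) where b = false means x and b = true means x^-1. *)
Definition word (X : rack) := seq (X * bool).

Inductive sg_eq (X : rack) : word X -> word X -> Prop :=
| sg_refl w : sg_eq w w
| sg_sym u v : sg_eq u v -> sg_eq v u
| sg_trans u v w : sg_eq u v -> sg_eq v w -> sg_eq u w
| sg_ctx l r a b : sg_eq a b -> sg_eq (l ++ a ++ r) (l ++ b ++ r)
| sg_cancel x b : sg_eq [:: (x, b); (x, ~~ b)] [::]
| sg_conj x y : sg_eq [:: (y, true); (x, false); (y, false)] [:: (rop x y, false)].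

Definition winv (X : rack) (w : word X) : word X :=
  rev (map (fun p => (p.1, ~~ p.2)) w).

Definition wmap (X Y : rack) (f : X -> Y) (w : word X) : word Y :=
  map (fun p => (f p.1, p.2)) w.

(* Commutator subgroup Gamma'_X: subgroup generated by commutators
   [a,b] = a^-1 b^-1 a b (as a set of words, closed under sg_eq). *)
Inductive in_comm (X : rack) : word X -> Prop :=
| comm_gen a b : in_comm (winv a ++ winv b ++ a ++ b)
| comm_one : in_comm [::]
| comm_mul u v : in_comm u -> in_comm v -> in_comm (u ++ v)
| comm_inv u : in_comm u -> in_comm (winv u)
| comm_eq u v : sg_eq u v -> in_comm u -> in_comm v.

(* (X,Y) productive: Gamma'_{XxY} -> Gamma'_X x Gamma'_Y is injective. *)
Definition productive (X Y : rack) : Prop :=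
  forall w1 w2 : word (prod_rack X Y),
    in_comm w1 -> in_comm w2 ->
    sg_eq (wmap (fun p : prod_rack X Y => p.1) w1)
          (wmap (fun p : prod_rack X Y => p.1) w2) ->
    sg_eq (wmap (fun p : prod_rack X Y => p.2) w1)
          (wmap (fun p : prod_rack X Y => p.2) w2) ->
    sg_eq w1 w2.

Definition to_triv (X Y : rack) (p : prod_rack X Y) :
  prod_rack (Xtriv X) (Xtriv Y) := (comp_of p.1, comp_of p.2).

From mathcomp Require Import all_boot all_algebra zify boolp.
Set Implicit Arguments. Unset Strict Implicit. Unset Printing Implicit Defensive.

(* Put u = w1 w2^-1. Since (X, Y) is synchronized, the components of X x Y are
   the pairs of components, so equality of the images in Gamma of
   X_triv x Y_triv says that, on every component of X x Y, the exponent sum of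
   u vanishes. Letters of one component are conjugate (y^-1 x y = x^y), so a
   letter times an inverse letter of its component is a commutator; cancelling
   such pairs one at a time shows that u lies in the commutator subgroup. Its
   images in Gamma_X and Gamma_Y are trivial, hence u = 1 by productivity. *)

Section WordCalculus.
Variable X : rack.
Implicit Types u v w a b l r : word X.

Lemma sg_catl l a b : sg_eq a b -> sg_eq (l ++ a) (l ++ b).
Proof. by move=> eq_ab; have := sg_ctx l [::] eq_ab; rewrite !cats0. Qed.

Lemma sg_catr r a b : sg_eq a b -> sg_eq (a ++ r) (b ++ r).
Proof. exact: (sg_ctx [::] r). Qed.

Lemma winv_cat a b : winv (a ++ b) = winv b ++ winv a.
Proof. by rewrite /winv map_cat rev_cat. Qed.

Lemma winvK : involutive (@winv X).
Proof.
move=> w; rewrite /winv map_rev revK -map_comp -[RHS]map_id.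
by apply: eq_map => -[x b] /=; rewrite negbK.
Qed.

Lemma sg_mulV w : sg_eq (w ++ winv w) [::].
Proof.
elim: w => [|[x b] w IHw]; first exact: sg_refl.
rewrite /= (winv_cat [:: (x, b)] w) catA.
exact: sg_trans (sg_catl [:: (x, b)] (sg_catr _ IHw)) (sg_cancel x b).
Qed.

Lemma sg_Vmul w : sg_eq (winv w ++ w) [::].
Proof. by have := sg_mulV (winv w); rewrite winvK. Qed.

Lemma sg_mulKV w a : sg_eq (w ++ winv w ++ a) a.
Proof. by rewrite catA; exact (sg_catr a (sg_mulV w)). Qed.

Lemma sg_mulVK w a : sg_eq (winv w ++ w ++ a) a.
Proof. by rewrite catA; exact (sg_catr a (sg_Vmul w)). Qed.

Lemma sg_mulV1 u v : sg_eq (u ++ winv v) [::] <-> sg_eq u v.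
Proof.
split=> [uv1 | eq_uv].
  rewrite -[u]cats0; apply: sg_trans (sg_sym (sg_catl u (sg_Vmul v))) _.
  by rewrite catA; exact (sg_catr v uv1).
exact: sg_trans (sg_catr _ eq_uv) (sg_mulV v).
Qed.

Lemma sg_winv u v : sg_eq u v -> sg_eq (winv u) (winv v).
Proof.
move=> eq_uv; apply/sg_mulV1; rewrite winvK.
by apply: sg_trans (sg_catl _ (sg_sym eq_uv)) (sg_Vmul u).
Qed.

Lemma in_comm_conj u g : in_comm u -> in_comm (winv g ++ u ++ g).
Proof.
move=> comm_u; apply: (comm_eq (sg_mulKV u _)).
by apply: comm_mul => //; apply: comm_gen.
Qed.

Lemma in_comm_ins l a r : in_comm a -> in_comm (l ++ r) -> in_comm (l ++ a ++ r).
Proof.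
move=> comm_a comm_lr.
apply: (comm_eq (u := (l ++ a ++ winv l) ++ l ++ r)).
  by rewrite -!catA; do 2!apply: sg_catl; apply: sg_mulVK.
apply: comm_mul => //.
by have := in_comm_conj (winv l) comm_a; rewrite winvK.
Qed.

Lemma in_comm_swap l a b r :
  in_comm (l ++ a ++ b ++ r) -> in_comm (l ++ b ++ a ++ r).
Proof.
move=> comm_w.
apply: (comm_eq (u := (l ++ a ++ b) ++ (winv b ++ winv a ++ b ++ a) ++ r)).
  rewrite -!catA; apply: sg_catl.
  by have := sg_mulKV (a ++ b) (b ++ a ++ r); rewrite winv_cat -!catA.
by apply: in_comm_ins; [apply: comm_gen | rewrite -!catA].
Qed.

Lemma wmap_cat (Y : rack) (f : X -> Y) a b : wmap f (a ++ b) = wmap f a ++ wmap f b.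
Proof. exact: map_cat. Qed.

Lemma wmap_winv (Y : rack) (f : X -> Y) w : wmap f (winv w) = winv (wmap f w).
Proof. by rewrite /wmap /winv map_rev -!map_comp. Qed.

End WordCalculus.

Lemma has_split (T : Type) (a : pred T) (s : seq T) :
  has a s -> exists s1 x s2, s = s1 ++ x :: s2 /\ a x.
Proof.
elim: s => [|y s IHs] //= /orP[ay | /IHs[s1 [x [s2 [-> ax]]]]].
  by exists [::], y, s.
by exists (y :: s1), x, s2.
Qed.

Section ExponentSums.
Variable X : rack.
Implicit Types (P : pred X) (u v w l r : word X).
Local Open Scope ring_scope.

Definition letter_count P b w : nat := count (fun a => P a.1 && (a.2 == b)) w.

Definition exp_sum P w : int := (letter_count P false w)%:Z - (letter_count P true w)%:Z.

Lemma exp_sum_cat P u v : exp_sum P (u ++ v) = exp_sum P u + exp_sum P v.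
Proof. rewrite /exp_sum /letter_count !count_cat; lia. Qed.

Lemma letter_count_winv P b w : letter_count P b (winv w) = letter_count P (~~ b) w.
Proof.
rewrite /letter_count /winv count_rev count_map.
by apply: eq_count => -[x c] /=; case: b; case: c.
Qed.

Lemma exp_sum_winv P w : exp_sum P (winv w) = - exp_sum P w.
Proof. rewrite /exp_sum !letter_count_winv /=; lia. Qed.

Lemma eq_exp_sum P Q : P =1 Q -> exp_sum P =1 exp_sum Q.
Proof.
move=> eqPQ w; rewrite /exp_sum /letter_count.
by rewrite !(@eq_count _ _ _ (fun a => congr1 (andb^~ _) (eqPQ a.1))).
Qed.

Lemma sg_eq_exp_sum P u v :
  (forall x y, P (rop x y) = P x) -> sg_eq u v -> exp_sum P u = exp_sum P v.
Proof.
move=> P_rop; elim=> {u v}.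
- by [].
- by move=> u v _ ->.
- by move=> u v w _ -> _ ->.
- by move=> l r a b _ eq_ab; rewrite !exp_sum_cat eq_ab.
- by move=> x b; rewrite /exp_sum /letter_count /=; case: b; case: (P x).
- move=> x y; rewrite /exp_sum /letter_count /= P_rop.
  by case: (P x); case: (P y).
Qed.

Lemma exp_sum_pair P (p q : X) b l r : P p = P q ->
  exp_sum P ((p, b) :: l ++ (q, ~~ b) :: r) = exp_sum P (l ++ r).
Proof.
move=> Ppq; rewrite /exp_sum /letter_count /= !count_cat /= Ppq.
by case: b; case: (P q); lia.
Qed.

Lemma exp_sum_cons_has P (p : X) b r : P p -> exp_sum P ((p, b) :: r) = 0 ->
  has (fun a => P a.1 && (a.2 == ~~ b)) r.
Proof.
move=> Pp; rewrite has_count /exp_sum /letter_count /= Pp.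
by case: b => /=; lia.
Qed.

End ExponentSums.

Lemma exp_sum_wmap (X Y : rack) (f : X -> Y) (P : pred Y) w :
  exp_sum P (wmap f w) = exp_sum (preim f P) w.
Proof. by rewrite /exp_sum /letter_count /wmap !count_map. Qed.

Section Components.
Variable X : rack.
Implicit Types (p q x y : X) (w l r : word X).

Definition in_comp x : pred X := fun y => `[< connected x y >].

(* [exp_sum (in_comp x) w] is the coordinate at the component of [x] of the
   image of [w] in the free abelian group Gamma of X_triv. *)
Definition balanced w := forall x, exp_sum (in_comp x) w = 0.

Lemma in_comp_conn x p q : connected p q -> in_comp x p = in_comp x q.
Proof.
move=> conn_pq; apply: asbool_equiv_eq.
by split=> [conn_xp | conn_xq];
  [apply: conn_trans conn_pq | apply: conn_trans (conn_sym conn_pq)].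
Qed.

Lemma connected_conj p q : connected p q ->
  exists g, forall b, sg_eq [:: (q, b)] (winv g ++ [:: (p, b)] ++ g).
Proof.
elim=> {p q} [x | x y _ [g conj_g] | x y z _ [g conj_g] _ [h conj_h] | x y].
- by exists [::] => b; apply: sg_refl.
- exists (winv g) => b; rewrite winvK; apply: sg_sym.
  apply: sg_trans (sg_catl g (sg_catr (winv g) (conj_g b))) _.
  by rewrite -!catA; apply: sg_trans (sg_mulKV _ _) _; rewrite -[X in sg_eq _ X]cats0;
    apply: sg_catl; apply: sg_mulV.
- exists (g ++ h) => b; apply: sg_trans (conj_h b) _.
  by have := sg_catl (winv h) (sg_catr h (conj_g b)); rewrite winv_cat -!catA.
- exists [:: (y, false)] => -[]; first exact: sg_winv (sg_sym (sg_conj x y)).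
  exact: sg_sym (sg_conj x y).
Qed.

Lemma in_comm_pair p q b : connected p q -> in_comm [:: (p, b); (q, ~~ b)].
Proof.
case/connected_conj=> g conj_g.
apply: (comm_eq _ (comm_gen [:: (p, ~~ b)] g)); rewrite /= negbK.
exact: sg_sym (sg_catl [:: (p, b)] (conj_g (~~ b))).
Qed.

Lemma in_comm_cons_pair p q b l r : connected p q -> in_comm (l ++ r) ->
  in_comm ((p, b) :: l ++ (q, ~~ b) :: r).
Proof.
move=> conn_pq comm_lr.
apply: (@in_comm_swap _ [:: (p, b)] [:: (q, ~~ b)] l r).
exact: (@in_comm_ins _ [::] _ _ (in_comm_pair b conn_pq)).
Qed.

Lemma balanced_in_comm w : balanced w -> in_comm w.
Proof.
move: {-1}(size w) (leqnn (size w)) => n; elim: n w => [|n IHn] [|[p b] r] //=;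
  try by move=> *; apply: comm_one.
move=> size_r bal.
have [l [[q c] [r' [def_r /andP[/asboolP conn_pq /eqP/= def_c]]]]] :=
  has_split (exp_sum_cons_has (P := in_comp p) (asboolT (conn_refl p)) (bal p)).
subst r c; apply: (in_comm_cons_pair _ conn_pq (IHn _ _ _)).
  by move: size_r; rewrite !size_cat /=; lia.
by move=> x; rewrite -(bal x) exp_sum_pair // (in_comp_conn x conn_pq).
Qed.

End Components.

Lemma balanced_of_triv_image (X W : rack) (k : X -> W) (w1 w2 : word X) :
  (forall c d : W, rop c d = c) -> (forall x y, k x = k y <-> connected x y) ->
  sg_eq (wmap k w1) (wmap k w2) -> balanced (w1 ++ winv w2).
Proof.
move=> W_triv k_comp eq_w x.
pose at_kx : pred W := fun c => `[< k x = c >].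
have comp_kx : in_comp x =1 preim k at_kx.
  by move=> y; apply/esym/asbool_equiv_eq/k_comp.
rewrite exp_sum_cat exp_sum_winv !(eq_exp_sum comp_kx) -!exp_sum_wmap.
by rewrite (sg_eq_exp_sum _ eq_w) ?GRing.subrr // => c d; rewrite W_triv.
Qed.

Lemma connected_morph (X Y : rack) (f : X -> Y) (x y : X) :
  (forall x y, f (rop x y) = rop (f x) (f y)) -> connected x y -> connected (f x) (f y).
Proof.
move=> f_morph; elim=> {x y} [x | x y _ | x y z _ conn_xy _ | x y].
- exact: conn_refl.
- exact: conn_sym.
- exact: conn_trans.
- by rewrite f_morph; apply: conn_step.
Qed.

Lemma comp_of_eqP (X : rack) (a b : X) : comp_of a = comp_of b <-> connected a b.
Proof.
split=> [/(congr1 (@proj1_sig _ _)) /= -> | conn_ab]; first exact: conn_refl.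
apply: eq_exist; apply/funext => z; apply/propext.
by split=> [conn_az | conn_bz];
  [apply: conn_trans (conn_sym conn_ab) _ | apply: conn_trans conn_ab _].
Qed.

Lemma comp_rep_conn (X : rack) (a : X) : connected (comp_rep (comp_of a)) a.
Proof.
rewrite /comp_rep.
case: (IndefiniteDescription.constructive_indefinite_description _ _) => r /= def_r.
by rewrite -def_r; apply: conn_refl.
Qed.

Section ProductComponents.
Variables X Y : rack.
Implicit Types p q : prod_rack X Y.

Lemma connected_fst p q : connected p q -> connected p.1 q.1.
Proof. exact: (@connected_morph (prod_rack X Y) X fst). Qed.

Lemma connected_snd p q : connected p q -> connected p.2 q.2.
Proof. exact: (@connected_morph (prod_rack X Y) Y snd). Qed.

Lemma sync_map_comp_of p : sync_map (comp_of p) = to_triv p.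
Proof.
have conn_rep := comp_rep_conn p.
by rewrite /sync_map; congr pair; apply/comp_of_eqP;
  [apply: connected_fst conn_rep | apply: connected_snd conn_rep].
Qed.

Lemma to_triv_eqP p q : synchronized X Y -> to_triv p = to_triv q <-> connected p q.
Proof.
case=> sync_inv sync_mapK _; split=> [eq_pq | conn_pq].
  by apply/comp_of_eqP; rewrite -[LHS]sync_mapK -[RHS]sync_mapK !sync_map_comp_of eq_pq.
rewrite /to_triv; congr pair; apply/comp_of_eqP.
  exact: connected_fst.
exact: connected_snd.
Qed.

End ProductComponents.

Theorem corollary4p29 (X Y : rack) :
  productive X Y -> synchronized X Y ->
  forall w1 w2 : word (prod_rack X Y),
    sg_eq (wmap (fun p : prod_rack X Y => p.1) w1)
          (wmap (fun p : prod_rack X Y => p.1) w2) ->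
    sg_eq (wmap (fun p : prod_rack X Y => p.2) w1)
          (wmap (fun p : prod_rack X Y => p.2) w2) ->
    sg_eq (wmap (@to_triv X Y) w1) (wmap (@to_triv X Y) w2) ->
    sg_eq w1 w2.
Proof.
move=> productiveXY syncXY w1 w2 eq_fst eq_snd eq_triv.
have comm_w12 : in_comm (w1 ++ winv w2).
  apply/balanced_in_comm/(balanced_of_triv_image _ _ eq_triv) => [[c1 c2] d // | p q].
  exact: to_triv_eqP syncXY.
apply/sg_mulV1/(productiveXY _ _ comm_w12 (comm_one _)).
- by rewrite wmap_cat wmap_winv; apply/sg_mulV1.
- by rewrite wmap_cat wmap_winv; apply/sg_mulV1.
Qed.
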